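(* Let $S$ be a numerical semigroup with minimal generators $a_1<a_2<\cdots<a_\nu$ ($\nu\ge2$), multiplicity $\mu=a_1$ and conductor $c$, and suppose $a_2>\frac{c+\mu}{3}$. Let $P=\{a_1,\dots,a_\nu\}$, $q_1=|\{a\in P\setminus\{\mu\}: \tfrac13(c+\mu)<a<\tfrac12(c+\mu)\}|$ and $q_2=|\{a\in P\setminus\{\mu\}: \tfrac12(c+\mu)\le a<\tfrac23(c+\mu)\}|$. Then: (a) $\mu\le \nu+\frac{q_1(q_1+1)}{2}+q_1q_2$; (b) $\mu\le\frac12\nu(\nu+1)$; (c) $q_1\ge \frac{2\nu-1-\sqrt{(2\nu+1)^2-8\mu}}{2}$.
   Context: A numerical semigroup is a submonoid $S\subseteq\mathbb{N}$ with finite complement. The minimal generating set has cardinality $\nu$ (embedding dimension); its smallest element $\mu$ is the multiplicity. The conductor $c$ is the least integer with $c+\mathbb{N}\subseteq S$. *)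

From mathcomp Require Import all_boot all_order all_algebra.
Set Implicit Arguments. Unset Strict Implicit. Unset Printing Implicit Defensive.

Definition numerical_semigroup (S : pred nat) : Prop :=
  [/\ S 0,
      (forall x y, S x -> S y -> S (x + y)) &
      exists N, forall n, N <= n -> S n].

Definition min_gen (S : pred nat) (a : nat) : Prop :=
  [/\ S a, 0 < a &
      ~ exists x y, [/\ S x, S y, 0 < x, 0 < y & x + y = a]].

Definition min_gens_seq (S : pred nat) (gens : seq nat) : Prop :=
  sorted ltn gens /\ (forall a, a \in gens <-> min_gen S a).

Definition is_conductor (S : pred nat) (c : nat) : Prop :=
  (forall n, c <= n -> S n) /\
  (forall c', (forall n, c' <= n -> S n) -> c <= c').

From mathcomp Require Import all_boot all_order all_algebra.
Import Order.TTheory GRing.Theory Num.Theory.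
From mathcomp Require Import zify ring lra.
From Stdlib Require Import Classical.

Set Implicit Arguments.
Unset Strict Implicit.
Unset Printing Implicit Defensive.

(* The Apery set Ap(S, mu) = {x in S | x - mu \notin S} has mu elements, one per
   residue class mod mu, all below c + mu. An element of Ap(S, mu) is a sum of
   minimal generators other than mu; as these exceed (c + mu)/3, a nonzero
   element of Ap(S, mu) is a single generator or the sum a + b of two of them
   with a + b < c + mu. Such a pair has both summands in ((c + mu)/3, (c + mu)/2),
   or one there and the other in [(c + mu)/2, 2(c + mu)/3). Counting gives (a);
   (b) and (c) follow from (a) and q1 + q2 <= nu - 1 by elementary algebra. *)

Section Apery.

Variable S : pred nat.
Hypothesis S0 : S 0.
Hypothesis SD : forall x y, S x -> S y -> S (x + y).

Lemma exists_min_gen_le x :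
  S x -> 0 < x -> exists g, [/\ min_gen S g, g <= x & S (x - g)].
Proof.
elim: x {-2}x (leqnn x) => [|n IH] x le_xn Sx x_gt0; first by lia.
case: (classic (min_gen S x)) => [gen_x | not_gen_x].
  by exists x; rewrite subnn.
have [y [z [Sy Sz y_gt0 z_gt0 def_x]]] :
    exists y z, [/\ S y, S z, 0 < y, 0 < z & y + z = x].
  by apply: NNPP => no_split; apply: not_gen_x.
subst x.
have [g [gen_g le_gy Syg]] := IH y ltac:(lia) Sy y_gt0.
exists g; split => //; first by lia.
by rewrite addnC -addnBA //; apply: SD.
Qed.

Definition apery (m : nat) : pred nat := fun x => S x && ~~ ((m <= x) && S (x - m)).

Lemma apery_self m : apery m m = false.
Proof. by rewrite /apery leqnn subnn S0 andbF. Qed.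

Lemma apery_summand m x y :
  apery m x -> S y -> y <= x -> S (x - y) -> apery m y.
Proof.
move=> /andP[_ not_Sxm] Sy le_yx Sxy; rewrite /apery Sy; apply: contra not_Sxm.
case/andP=> le_my Sym; rewrite (leq_trans le_my le_yx).
have -> : x - m = (x - y) + (y - m) by lia.
exact: SD.
Qed.

Lemma apery_sum_min_gens m x : apery m x ->
  exists s, sumn s = x /\ forall g, g \in s -> min_gen S g /\ g != m.
Proof.
elim: x {-2}x (leqnn x) => [|n IH] x le_xn Ap_x.
  by exists [::]; move: le_xn; rewrite leqn0 => /eqP->.
have [-> | x_gt0] := posnP x; first by exists [::].
have Sx : S x by case/andP: Ap_x.
have [g [gen_g le_gx Sxg]] := exists_min_gen_le Sx x_gt0.
have [Sg g_gt0 _] := gen_g.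
have Ap_g := apery_summand Ap_x Sg le_gx Sxg.
have Ap_xg : apery m (x - g) by apply: apery_summand Ap_x Sxg (leq_subr g x) _; rewrite subKn.
have [s [sum_s gens_s]] := IH (x - g) ltac:(lia) Ap_xg.
exists (g :: s); split => [/= | h]; first by rewrite sum_s subnKC.
rewrite in_cons => /predU1P[-> | /gens_s //]; split => //.
by apply: contraTneq Ap_g => ->; rewrite apery_self.
Qed.

Lemma apery_small_cases m K (gs : seq nat) x :
  (forall g, min_gen S g -> g != m -> g \in gs) ->
  (forall g, g \in gs -> K < 3 * g) ->
  apery m x -> x < K ->
  [\/ x = 0, x \in gs | exists g h, [/\ g \in gs, h \in gs & x = g + h]].
Proof.
move=> gens_gs gs_big Ap_x lt_xK.
have [s [def_x gens_s]] := apery_sum_min_gens Ap_x; subst x; clear Ap_x.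
have {gens_s} in_gs g : g \in s -> g \in gs.
  by move=> /gens_s[gen_g ne_gm]; apply: gens_gs.
case: s in_gs lt_xK => [|g [|h [|k s]]] in_gs /= lt_xK.
- by constructor 1.
- by constructor 2; rewrite addn0 in_gs ?mem_head.
- by constructor 3; exists g, h; rewrite addn0 !in_gs ?mem_head ?inE ?eqxx ?orbT.
have big y : y \in [:: g, h, k & s] -> K < 3 * y by move/in_gs/gs_big.
move: (big g) (big h) (big k); rewrite !inE !eqxx /= ?orbT.
by move=> /(_ isT) ? /(_ isT) ? /(_ isT) ?; lia.
Qed.

End Apery.

Lemma leq_count_apery (S : pred nat) m c :
  (forall n, c <= n -> S n) -> m <= count (apery S m) (iota 0 (c + m)).
Proof.
move=> S_ge_c; set X := filter (apery S m) (iota 0 (c + m)).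
have residues : {subset iota 0 m <= map (modn^~ m) X}.
  move=> r; rewrite mem_iota add0n => /andP[_ lt_rm].
  have exP : exists y, S y && (y %% m == r).
    exists (c * m + r); rewrite S_ge_c; last by nia.
    by rewrite modnMDl (modn_small lt_rm) eqxx.
  case: (ex_minnP exP) => w /andP[Sw /eqP <-] w_min.
  have w_le y : S y -> y %% m = w %% m -> w <= y.
    by move=> Sy eq_ym; apply: w_min; rewrite Sy eq_ym eqxx.
  have modBm : m <= w -> (w - m) %% m = w %% m.
    by move=> le_mw; rewrite -{2}(subnK le_mw) modnDr.
  apply: map_f; rewrite mem_filter /apery Sw mem_iota /=.
  apply/andP; split.
    apply/negP => /andP[le_mw Swm].
    by have := w_le _ Swm (modBm le_mw); lia.
  rewrite ltnNge; apply/negP => le_w.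
  have le_mw : m <= w by lia.
  have Swm : S (w - m) by apply: S_ge_c; lia.
  by have := w_le _ Swm (modBm le_mw); lia.
rewrite -size_filter -(size_map (modn^~ m)) -{1}(size_iota 0 m).
exact: uniq_leq_size (iota_uniq 0 m) residues.
Qed.

Fixpoint pair_sums (s : seq nat) : seq nat :=
  if s is a :: s' then [seq a + b | b <- s] ++ pair_sums s' else [::].

Lemma size_pair_sums s : 2 * size (pair_sums s) = size s * (size s).+1.
Proof. by elim: s => [|a s IH] //=; rewrite size_cat size_map /=; nia. Qed.

Lemma mem_pair_sums s a b : a \in s -> b \in s -> a + b \in pair_sums s.
Proof.
elim: s => [|x s IH] // a_s b_s.
change (a + b \in [seq x + y | y <- x :: s] ++ pair_sums s); rewrite mem_cat.
case/predU1P: a_s => [-> | a_s]; first by rewrite map_f.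
case/predU1P: b_s => [-> | b_s]; first by rewrite addnC map_f // mem_behead.
by rewrite IH ?orbT.
Qed.

Definition third_to_half K a := (K < 3 * a) && (2 * a < K).
Definition half_to_two_thirds K a := (K <= 2 * a) && (3 * a < 2 * K).

Lemma count_thirds_le_size K s :
  count (third_to_half K) s + count (half_to_two_thirds K) s <= size s.
Proof.
rewrite -count_predUI (@eq_count _ (predI _ _) pred0) ?count_pred0 ?addn0 ?count_size //.
by move=> a /=; rewrite /third_to_half /half_to_two_thirds; lia.
Qed.

Lemma small_pair_sum_cases K g h : K < 3 * g -> K < 3 * h -> g + h < K ->
  [|| third_to_half K g && third_to_half K h,
      third_to_half K g && half_to_two_thirds K h |
      half_to_two_thirds K g && third_to_half K h].
Proof. by rewrite /third_to_half /half_to_two_thirds; lia. Qed.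

Lemma size_le_small_sums K (gs X : seq nat) :
  uniq X -> (forall g, g \in gs -> K < 3 * g) ->
  (forall x, x \in X -> x < K /\
     [\/ x = 0, x \in gs | exists g h, [/\ g \in gs, h \in gs & x = g + h]]) ->
  2 * size X <= 2 * (size gs).+1
    + count (third_to_half K) gs * (count (third_to_half K) gs + 1)
    + 2 * (count (third_to_half K) gs * count (half_to_two_thirds K) gs).
Proof.
move=> uniq_X gs_big X_sums.
set A := filter (third_to_half K) gs; set B := filter (half_to_two_thirds K) gs.
have sub_X : {subset X <= 0 :: gs ++ pair_sums A ++ [seq a + b | a <- A, b <- B]}.
  move=> x /X_sums[lt_xK [-> | x_gs | [g [h [g_gs h_gs def_x]]]]].
  - exact: mem_head.
  - by rewrite !inE mem_cat x_gs orbT.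
  rewrite !inE !mem_cat; apply/orP; right; apply/orP; right; subst x.
  have := small_pair_sum_cases (gs_big g g_gs) (gs_big h h_gs) lt_xK.
  case/or3P=> /andP[Pg Ph].
  - by rewrite mem_pair_sums ?mem_filter ?Pg ?Ph.
  - by apply/orP; right; apply/allpairsP; exists (g, h); rewrite !mem_filter Pg Ph.
  - by apply/orP; right; rewrite addnC; apply/allpairsP; exists (h, g); rewrite !mem_filter Pg Ph.
have := uniq_leq_size uniq_X sub_X.
rewrite /= !size_cat size_allpairs !size_filter.
by have := size_pair_sums A; rewrite size_filter; nia.
Qed.

Lemma multiplicity_le_small_sums (S : pred nat) m c (gs : seq nat) :
  S 0 -> (forall x y, S x -> S y -> S (x + y)) -> (forall n, c <= n -> S n) ->
  (forall g, min_gen S g -> g != m -> g \in gs) ->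
  (forall g, g \in gs -> c + m < 3 * g) ->
  2 * m <= 2 * (size gs).+1
    + count (third_to_half (c + m)) gs * (count (third_to_half (c + m)) gs + 1)
    + 2 * (count (third_to_half (c + m)) gs * count (half_to_two_thirds (c + m)) gs).
Proof.
move=> S0 SD S_ge_c gens_gs gs_big.
apply: leq_trans (size_le_small_sums (filter_uniq (apery S m) (iota_uniq 0 (c + m))) gs_big _).
  by rewrite leq_mul2l size_filter leq_count_apery ?orbT.
move=> x; rewrite mem_filter mem_iota => /andP[Ap_x /andP[_ lt_x]].
by split=> //; apply: apery_small_cases Ap_x lt_x.
Qed.

Lemma sorted_ltn_head_leq (s : seq nat) x : sorted ltn s -> x \in s -> head 0 s <= x.
Proof.
case: s => [|a s] //= /(order_path_min ltn_trans)/allP lt_a.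
by rewrite inE => /predU1P[-> // | /lt_a/ltnW].
Qed.

Lemma multiplicity_quadratic_bound m nu a b :
  2 * m <= 2 * nu + a * (a + 1) + 2 * (a * b) -> a + b < nu ->
  2 * m + a * a + a <= 2 * nu + 2 * a * nu.
Proof.
move=> le_m lt_ab; have : a * b <= a * (nu.-1 - a) by rewrite leq_mul2l; lia.
by nia.
Qed.

Lemma multiplicity_triangular_bound m nu a :
  2 * m + a * a + a <= 2 * nu + 2 * a * nu -> a < nu -> 2 * m <= nu * (nu + 1).
Proof. by nia. Qed.

Lemma quadratic_le0_root_le (R : rcfType) (b k x : R) :
  (x ^+ 2 - b * x + k <= 0)%R -> ((b - Num.sqrt (b ^+ 2 - 4 * k)) / 2 <= x)%R.
Proof.
move=> le0; have sq_le : ((2 * x - b) ^+ 2 <= b ^+ 2 - 4 * k)%R by nra.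
have : (`|2 * x - b| <= Num.sqrt (b ^+ 2 - 4 * k))%R.
  by rewrite -sqrtr_sqr ler_sqrt // (le_trans (sqr_ge0 _) sq_le).
have : (b - 2 * x <= `|2 * x - b|)%R by rewrite -normrN opprB ler_norm.
lra.
Qed.

Theorem proposition2p2 (R : rcfType) (S : pred nat) (gens : seq nat) (c : nat) :
  numerical_semigroup S ->
  min_gens_seq S gens ->
  is_conductor S c ->
  2 <= size gens ->
  (* a_2 > (c + mu)/3, with mu = a_1 *)
  c + nth 0 gens 0 < 3 * nth 0 gens 1 ->
  let nu := size gens in
  let mu := nth 0 gens 0 in
  (* P \ {mu} = behead gens *)
  let q1 := count (fun a => (c + mu < 3 * a) && (2 * a < c + mu)) (behead gens) in
  let q2 := count (fun a => (c + mu <= 2 * a) && (3 * a < 2 * (c + mu))) (behead gens) in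
  [/\ (mu%:R <= nu%:R + (q1 * (q1 + 1))%:R / 2 + (q1 * q2)%:R :> R)%R,
      (mu%:R <= (nu * (nu + 1))%:R / 2 :> R)%R &
      ((2 * nu%:R - 1 - Num.sqrt ((2 * nu%:R + 1) ^+ 2 - 8 * mu%:R)) / 2
         <= q1%:R :> R)%R].
Proof.
move=> [S0 SD _] [sorted_gens gensP] [S_ge_c _].
case: gens sorted_gens gensP => [|m gs] // sorted_gens gensP _ lt_a2 nu mu q1 q2.
have gs_big g : g \in gs -> c + m < 3 * g.
  have lt_head : c + m < 3 * head 0 gs := lt_a2.
  by move/(sorted_ltn_head_leq (path_sorted sorted_gens)); lia.
have gens_gs g : min_gen S g -> g != m -> g \in gs.
  by move/gensP; rewrite inE => /predU1P[->|]; rewrite ?eqxx.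
have le_mu : 2 * m <= 2 * nu + q1 * (q1 + 1) + 2 * (q1 * q2) :=
  multiplicity_le_small_sums S0 SD S_ge_c gens_gs gs_big.
have lt_q12 : q1 + q2 < nu := count_thirds_le_size (c + m) gs.
have le_quad := multiplicity_quadratic_bound le_mu lt_q12.
have le_nu := multiplicity_triangular_bound le_quad (leq_ltn_trans (leq_addr q2 q1) lt_q12).
clearbody nu q1 q2; rewrite {}/mu /=; move: le_mu le_quad le_nu.
rewrite -!(ler_nat R) !(natrD, natrM) ?mulr1n => le_mu le_quad le_nu.
split; [lra | lra |].
have := @quadratic_le0_root_le R (2 * nu%:R - 1) (2 * m%:R - 2 * nu%:R) q1%:R.
have -> : ((2 * nu%:R - 1) ^+ 2 - 4 * (2 * m%:R - 2 * nu%:R)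
           = (2 * nu%:R + 1) ^+ 2 - 8 * m%:R :> R)%R by ring.
by apply; nra.
Qed.
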